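(* Let $E$ and $F$ be infinite dimensional Archimedean Riesz spaces. Then the free product $\mathcal{B}(E)\otimes\mathcal{B}(F)$ is not Boolean isomorphic to $\mathcal{B}(E\bar{\otimes}F)$.
   Context: For an Archimedean Riesz space $E$, $\mathcal{B}(E)$ is the set of all bands of $E$ ordered by inclusion; it is a Boolean algebra. $E\bar{\otimes}F$ is Fremlin's Archimedean Riesz space tensor product: the Archimedean Riesz space $G$ with a Riesz bimorphism $\otimes\colon E\times F\to G$ such that every Riesz bimorphism from $E\times F$ into an Archimedean Riesz space $H$ factors as $T\circ\otimes$ for a unique Riesz homomorphism $T\colon G\to H$. The free product $\mathcal{A}\otimes\mathcal{B}$ of Boolean algebras is the Boolean algebra of open-and-closed subsets of $Z_1\times Z_2$ (product topology), where $Z_1,Z_2$ are the Stone spaces of $\mathcal{A},\mathcal{B}$. *)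

From HB Require Import structures.
From mathcomp Require Import all_boot all_order all_algebra.
From mathcomp Require Import boolp classical_sets.
From mathcomp Require Import Rstruct.
From Stdlib Require Import Reals.

Set Implicit Arguments.
Unset Strict Implicit.
Unset Printing Implicit Defensive.

Import Order.TTheory GRing.Theory Num.Theory.
Local Open Scope ring_scope.
Local Open Scope classical_set_scope.

Record riesz := Riesz {
  rcar :> lmodType R;
  rle : rcar -> rcar -> Prop;
  rjoin : rcar -> rcar -> rcar;
  rle_refl : forall x, rle x x;
  rle_anti : forall x y, rle x y -> rle y x -> x = y;
  rle_trans : forall x y z, rle x y -> rle y z -> rle x z;
  rle_add : forall x y z, rle x y -> rle (x + z) (y + z);
  rle_scale : forall (a : R) x y, 0 <= a -> rle x y -> rle (a *: x) (a *: y);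
  rjoin_ubl : forall x y, rle x (rjoin x y);
  rjoin_ubr : forall x y, rle y (rjoin x y);
  rjoin_lub : forall x y z, rle x z -> rle y z -> rle (rjoin x y) z
}.

Section RieszDefs.
Variable E : riesz.

Definition rmeet (x y : E) : E := - rjoin (- x) (- y).
Definition rabs (x : E) : E := rjoin x (- x).
Definition rdisj (x y : E) : Prop := rmeet (rabs x) (rabs y) = 0.

Definition dcompl (A : set E) : set E := [set x | forall y, A y -> rdisj x y].

Definition is_ideal (A : set E) : Prop :=
  A 0 /\ (forall x y, A x -> A y -> A (x + y)) /\
  (forall (a : R) x, A x -> A (a *: x)) /\
  (forall x y, A y -> rle (rabs x) (rabs y) -> A x).

Definition is_sup (D : set E) (s : E) : Prop :=
  (forall d, D d -> rle d s) /\
  (forall u, (forall d, D d -> rle d u) -> rle s u).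

Definition is_band (A : set E) : Prop :=
  is_ideal A /\ (forall D s, D `<=` A -> is_sup D s -> A s).

Definition archimedean : Prop :=
  forall x y : E, rle 0 x -> (forall n : nat, rle (n%:R *: x) y) -> x = 0.

Definition infinite_dim : Prop :=
  forall n : nat, exists v : 'I_n -> E,
    forall c : 'I_n -> R, \sum_(i < n) c i *: v i = 0 -> forall i, c i = 0.

(* ultrafilters of the Boolean algebra B(E) (bands ordered by inclusion;
   bottom {0}, top E, meet = intersection, complement = disjoint complement) *)
Definition is_ultra (U : set (set E)) : Prop :=
  (forall A, U A -> is_band A) /\ U setT /\ ~ U [set 0] /\
  (forall A B, U A -> U B -> U (A `&` B)) /\
  (forall A B, U A -> is_band B -> A `<=` B -> U B) /\
  (forall A, is_band A -> U A \/ U (dcompl A)).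

Definition stone := {U : set (set E) | is_ultra U}.

End RieszDefs.

Definition linear_map (E G : riesz) (T : E -> G) : Prop :=
  (forall x y, T (x + y) = T x + T y) /\ (forall (a : R) x, T (a *: x) = a *: T x).

Definition riesz_hom (E G : riesz) (T : E -> G) : Prop :=
  linear_map T /\ (forall x y, T (rjoin x y) = rjoin (T x) (T y)).

Definition riesz_bimorphism (E F G : riesz) (phi : E -> F -> G) : Prop :=
  (forall x, linear_map (phi x)) /\ (forall y, linear_map (fun x => phi x y)) /\
  (forall x, rle 0 x -> riesz_hom (phi x)) /\
  (forall y, rle 0 y -> riesz_hom (fun x => phi x y)).

Definition fremlin_tensor (E F G : riesz) (tens : E -> F -> G) : Prop :=
  archimedean G /\ riesz_bimorphism tens /\
  forall (H : riesz), archimedean H -> forall phi : E -> F -> H,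
    riesz_bimorphism phi ->
    (exists T : G -> H, riesz_hom T /\ forall x y, phi x y = T (tens x y)) /\
    (forall T1 T2 : G -> H, riesz_hom T1 -> riesz_hom T2 ->
       (forall x y, phi x y = T1 (tens x y)) ->
       (forall x y, phi x y = T2 (tens x y)) -> forall z, T1 z = T2 z).

(* Open subsets of the product Z1 x Z2 of the Stone spaces: the sets
   {U | a \in U}, a a band, form a base of the Stone topology, so the
   rectangles of such sets form a base of the product topology. *)
Definition prod_open (E F : riesz) (W : set (stone E * stone F)) : Prop :=
  forall p, W p -> exists (A : set E) (B : set F),
    is_band A /\ is_band B /\ proj1_sig p.1 A /\ proj1_sig p.2 B /\
    forall q : stone E * stone F, proj1_sig q.1 A -> proj1_sig q.2 B -> W q.

(* elements of the free product B(E) (x) B(F): clopen subsets of Z1 x Z2 *)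
Definition prod_clopen (E F : riesz) (W : set (stone E * stone F)) : Prop :=
  prod_open W /\ prod_open (~` W).

(* f is a Boolean isomorphism from the free product B(E) (x) B(F)
   (clopen sets, with intersection/union/complement) onto B(G)
   (bands, with meet A /\ B = A `&` B, join (A `|` B)^dd, complement A^d). *)
Definition boolean_iso (E F G : riesz) (f : set (stone E * stone F) -> set G) : Prop :=
  (forall W, prod_clopen W -> is_band (f W)) /\
  (forall B, is_band B -> exists W, prod_clopen W /\ f W = B) /\
  (forall W1 W2, prod_clopen W1 -> prod_clopen W2 -> f W1 = f W2 -> W1 = W2) /\
  (forall W1 W2, prod_clopen W1 -> prod_clopen W2 -> f (W1 `&` W2) = f W1 `&` f W2) /\
  (forall W1 W2, prod_clopen W1 -> prod_clopen W2 ->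
     f (W1 `|` W2) = dcompl (dcompl (f W1 `|` f W2))) /\
  (forall W, prod_clopen W -> f (~` W) = dcompl (f W)).

From Stdlib Require Import Rdefinitions.
From HB Require Import structures.
From mathcomp Require Import all_boot all_order all_algebra.
From mathcomp Require Import boolp classical_sets filter Rstruct reals.
From mathcomp Require Import lra zify.

(** The bands of any Riesz space [G] form a complete Boolean algebra (an
    intersection of bands is a band), so a Boolean isomorphism would make the
    clopen algebra of [Z1 * Z2] complete.  It is not: let [A_n], [B_n] be
    sequences of pairwise disjoint nonzero bands of [E], [F], choose points
    [U_n] of [Z1] and [V_n] of [Z2] containing them, and let [p] be the limit
    of [(U_n, V_n)] along a free ultrafilter on the integers.  A clopen upper
    bound [W] of the rectangles [A_n * B_n] is closed, so it contains [p],
    hence a basic rectangle [P * Q] around [p], hence a point [(U_n, V_m)] with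
    [n <> m]; removing [(P /\ A_n) * (Q /\ B_m)] from [W] leaves a smaller
    upper bound.

    Such sequences exist when [E] is Archimedean and infinite dimensional.  If
    [u_1, ..., u_j] were a maximal finite disjoint system, the elements disjoint
    from all [u_k] with [k <> i] would be comparable with [0], hence (by the
    Archimedean property and the completeness of the reals) multiples of [u_i]
    when bounded by one; projecting onto the lines [R u_i] then shows that the
    [u_i] span [E].  So there are disjoint systems of every finite size, and
    repeatedly splitting a band along a band and its disjoint complement, while
    keeping a side that still contains arbitrarily large disjoint families,
    yields an infinite disjoint sequence of bands. *)

Set Implicit Arguments.
Unset Strict Implicit.
Unset Printing Implicit Defensive.

Import Order.TTheory GRing.Theory Num.Theory.
Local Open Scope ring_scope.
Local Open Scope classical_set_scope.

Local Notation "x <=: y" := (rle x y) (at level 70, no associativity).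

(** * Lattice arithmetic in Riesz spaces *)

Section RieszLattice.
Variable E : riesz.
Implicit Types x y z : E.

Lemma rle_addl x y z : x <=: y -> z + x <=: z + y.
Proof. by rewrite ![z + _]addrC; apply: rle_add. Qed.

Lemma rleD x y x' y' : x <=: y -> x' <=: y' -> x + x' <=: y + y'.
Proof. by move=> /(rle_add x') h /(rle_addl y); apply: rle_trans. Qed.

Lemma rsubr_ge0 x y : 0 <=: y - x <-> x <=: y.
Proof.
split; first by move=> /(rle_add x); rewrite add0r subrK.
by move=> /(rle_add (- x)); rewrite subrr.
Qed.

Lemma rleN2 x y : - x <=: - y <-> y <=: x.
Proof. by rewrite -rsubr_ge0 opprK addrC rsubr_ge0. Qed.

Lemma rleNr x y : x <=: - y <-> y <=: - x.
Proof. by rewrite -rleN2 opprK. Qed.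

Lemma rleNl x y : - x <=: y <-> - y <=: x.
Proof. by rewrite -rleN2 opprK. Qed.

Lemma rscale_ge0 (a : R) x : 0 <= a -> 0 <=: x -> 0 <=: a *: x.
Proof. by move=> a0 /(rle_scale a0); rewrite scaler0. Qed.

Lemma rleZl (a b : R) x : 0 <=: x -> a <= b -> a *: x <=: b *: x.
Proof.
by move=> x0 ab; apply/rsubr_ge0; rewrite -scalerBl; apply: rscale_ge0; rewrite ?subr_ge0.
Qed.

Lemma rleZl_coef (a b : R) x : 0 <=: x -> x <> 0 -> a *: x <=: b *: x -> a <= b.
Proof.
move=> x0 xn0 abx; rewrite leNgt; apply/negP => ba; apply: xn0; apply: rle_anti => //.
have ia : 0 <= (a - b)^-1 by rewrite invr_ge0 subr_ge0 ltW.
move/rsubr_ge0: abx; rewrite -scalerBl => /(rle_scale ia).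
rewrite scaler0 scalerA -[b - a]opprB mulrN mulVf ?subr_eq0 ?gt_eqF // scaleN1r => /rleNr.
by rewrite oppr0.
Qed.

Lemma rjoinC x y : rjoin x y = rjoin y x.
Proof. by apply: rle_anti; apply: rjoin_lub; first [exact: rjoin_ubl|exact: rjoin_ubr]. Qed.

Lemma rjoinDl x y z : rjoin x y + z = rjoin (x + z) (y + z).
Proof.
apply: rle_anti; last by apply: rjoin_lub; apply: rle_add; [exact: rjoin_ubl|exact: rjoin_ubr].
have ub w : w + z <=: rjoin (x + z) (y + z) -> w <=: rjoin (x + z) (y + z) - z.
  by move=> /(rle_add (- z)); rewrite addrK.
by move/(rle_add z): (rjoin_lub (ub _ (rjoin_ubl _ _)) (ub _ (rjoin_ubr _ _))); rewrite subrK.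
Qed.

Lemma rjoinZ (a : R) x y : 0 < a -> a *: rjoin x y = rjoin (a *: x) (a *: y).
Proof.
move=> a0; apply: rle_anti; last first.
  by apply: rjoin_lub; apply: rle_scale (ltW a0) _; [exact: rjoin_ubl|exact: rjoin_ubr].
have aK w : a^-1 *: (a *: w) = w by rewrite scalerA mulVf ?gt_eqF // scale1r.
have Ka w : a *: (a^-1 *: w) = w by rewrite scalerA mulfV ?gt_eqF // scale1r.
have ia : 0 <= a^-1 by rewrite invr_ge0 ltW.
rewrite -[X in _ <=: X]Ka; apply: rle_scale (ltW a0) _.
by apply: rjoin_lub; rewrite -[X in X <=: _]aK; apply: rle_scale ia _;
  [exact: rjoin_ubl|exact: rjoin_ubr].
Qed.

Lemma rmeet_lel x y : rmeet x y <=: x.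
Proof. by apply/rleNl; apply: rjoin_ubl. Qed.

Lemma rmeet_ler x y : rmeet x y <=: y.
Proof. by apply/rleNl; apply: rjoin_ubr. Qed.

Lemma rmeet_glb x y z : z <=: x -> z <=: y -> z <=: rmeet x y.
Proof. by move=> zx zy; apply/rleNr; apply: rjoin_lub; apply/rleN2. Qed.

Lemma rmeetC x y : rmeet x y = rmeet y x.
Proof. by rewrite /rmeet rjoinC. Qed.

Lemma rmeetDl x y z : rmeet x y + z = rmeet (x + z) (y + z).
Proof. by rewrite /rmeet -[z]opprK -opprD rjoinDl !opprD !opprK. Qed.

Lemma rmeetZ (a : R) x y : 0 < a -> a *: rmeet x y = rmeet (a *: x) (a *: y).
Proof. by move=> a0; rewrite /rmeet scalerN rjoinZ // !scalerN. Qed.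

Lemma rmeet_lel2 x x' y : x <=: x' -> rmeet x y <=: rmeet x' y.
Proof.
by move=> xx'; apply: rmeet_glb (rmeet_ler _ _); apply: rle_trans (rmeet_lel _ _) xx'.
Qed.

Lemma rmeetxx x : rmeet x x = x.
Proof. by apply: rle_anti; [exact: rmeet_lel|apply: rmeet_glb; exact: rle_refl]. Qed.

Lemma rjoin_rmeet x y : rjoin x y + rmeet x y = x + y.
Proof.
have e : rjoin (- x) (- y) + (x + y) = rjoin x y.
  by rewrite rjoinDl addKr [- y + _]addrC addrK rjoinC.
by rewrite /rmeet -{1}e addrC addKr.
Qed.

Lemma rabs_ge x : x <=: rabs x.
Proof. exact: rjoin_ubl. Qed.

Lemma rabs_geN x : - x <=: rabs x.
Proof. exact: rjoin_ubr. Qed.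

Lemma rabs_ge0 x : 0 <=: rabs x.
Proof.
have : 0 <=: rabs x + rabs x by rewrite -(subrr x); apply: rleD; [exact: rabs_ge|exact: rabs_geN].
move=> /(rle_scale (a := 2%:R^-1)); rewrite invr_ge0 ler0n scaler0 => /(_ isT).
by rewrite -mulr2n -scaler_nat scalerA mulVf ?pnatr_eq0 // scale1r.
Qed.

Lemma ger0_rabs x : 0 <=: x -> rabs x = x.
Proof.
move=> x0; apply: rle_anti; last exact: rabs_ge.
apply: rjoin_lub; first exact: rle_refl.
by apply: (rle_trans (y := 0)) => //; apply/rleNl; rewrite oppr0.
Qed.

Lemma rabs_id x : rabs (rabs x) = rabs x.
Proof. exact/ger0_rabs/rabs_ge0. Qed.

Lemma rabsN x : rabs (- x) = rabs x.
Proof. by rewrite /rabs opprK rjoinC. Qed.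

Lemma rabs0 : rabs (0 : E) = 0.
Proof. exact/ger0_rabs/rle_refl. Qed.

Lemma rabs_eq0 x : rabs x = 0 -> x = 0.
Proof.
move=> x0; apply: rle_anti; first by rewrite -x0; exact: rabs_ge.
by apply/rleN2; rewrite oppr0 -x0; exact: rabs_geN.
Qed.

Lemma rle_rabsD x y : rabs (x + y) <=: rabs x + rabs y.
Proof.
by apply: rjoin_lub; rewrite ?opprD; apply: rleD; first [exact: rabs_ge|exact: rabs_geN].
Qed.

Lemma rabsZ (a : R) x : rabs (a *: x) = `|a| *: rabs x.
Proof.
have rabsZ_ge0 b : 0 <= b -> rabs (b *: x) = b *: rabs x.
  rewrite le_eqVlt => /orP[/eqP <-|b0]; first by rewrite !scale0r rabs0.
  by rewrite /rabs rjoinZ // scalerN.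
have [a0|a0] := leP 0 a; first by rewrite ger0_norm // rabsZ_ge0.
by rewrite ltr0_norm // -rabsN -scaleNr rabsZ_ge0 // oppr_ge0 ltW.
Qed.

Definition rpos x := rjoin x 0.

Lemma rpos_ge0 x : 0 <=: rpos x.
Proof. exact: rjoin_ubr. Qed.

Lemma rpos_ge x : x <=: rpos x.
Proof. exact: rjoin_ubl. Qed.

Lemma rpos_le x y : x <=: y -> rpos x <=: rpos y.
Proof. by move=> xy; apply: rjoin_lub; [apply: rle_trans xy (rpos_ge _)|exact: rpos_ge0]. Qed.

Lemma rpos_le_rabs x : rpos x <=: rabs x.
Proof. by apply: rjoin_lub; [exact: rabs_ge|exact: rabs_ge0]. Qed.

Lemma rabs_rpos x : rabs (rpos x) = rpos x.
Proof. exact/ger0_rabs/rpos_ge0. Qed.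

Lemma rabs_rpos_le x : rabs (rpos x) <=: rabs x.
Proof. by rewrite rabs_rpos; exact: rpos_le_rabs. Qed.

Lemma subr_rmeet x y : x - rmeet x y = rpos (x - y).
Proof. by rewrite /rmeet opprK addrC rjoinDl addNr rjoinC addrC. Qed.

Lemma rpos_sub x : rpos x - rpos (- x) = x.
Proof.
have -> : rpos (- x) = - rmeet x 0 by rewrite /rmeet /rpos opprK oppr0.
by rewrite opprK rjoin_rmeet addr0.
Qed.

Lemma rmeet_rpos_rposN x : rmeet (rpos x) (rpos (- x)) = 0.
Proof.
by apply: oppr_inj; apply: (@addrI _ (rpos x)); rewrite subr_rmeet rpos_sub oppr0 addr0.
Qed.

Lemma rmeetD_le x y z : 0 <=: x -> 0 <=: y -> 0 <=: z ->
  rmeet (x + y) z <=: rmeet x z + rmeet y z.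
Proof.
move=> x0 y0 z0; have z_le w : 0 <=: w -> z <=: w + z.
  by move=> w0; rewrite -{1}[z]add0r; apply: rle_add.
rewrite rmeetDl; apply: rmeet_glb; last first.
  by apply: rle_trans (rmeet_ler _ _) _; rewrite addrC; apply: z_le; apply: rmeet_glb.
rewrite [x + rmeet _ _]addrC rmeetDl; apply: rmeet_glb; first by rewrite addrC; exact: rmeet_lel.
by apply: rle_trans (rmeet_ler _ _) _; rewrite addrC; apply: z_le.
Qed.

Lemma rmeetZl_eq0 (t : R) x y : 0 <= t -> 0 <=: x -> 0 <=: y ->
  rmeet x y = 0 -> rmeet (t *: x) y = 0.
Proof.
move=> t0 x0 y0 xy0; apply: rle_anti; last by apply: rmeet_glb => //; exact: rscale_ge0.
have [t1|t1] := leP t 1.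
  by rewrite -xy0; apply: rmeet_lel2; rewrite -{2}[x]scale1r; apply: rleZl.
have tpos : 0 < t by apply: lt_trans t1.
rewrite -(scaler0 _ t) -xy0 rmeetZ // rmeetC [X in _ <=: X]rmeetC.
by apply: rmeet_lel2; rewrite -{1}[y]scale1r; apply: rleZl => //; exact: ltW.
Qed.

End RieszLattice.

(** * Disjointness and bands *)

Section Disjointness.
Variable E : riesz.
Implicit Types x y w : E.

Lemma rdisjC x y : rdisj x y -> rdisj y x.
Proof. by rewrite /rdisj rmeetC. Qed.

Lemma rdisj_le x y w : rabs x <=: rabs y -> rdisj y w -> rdisj x w.
Proof.
move=> xy yw; apply: rle_anti; last by apply: rmeet_glb; exact: rabs_ge0.
by rewrite -yw; apply: rmeet_lel2.
Qed.

Lemma rdisjD x y w : rdisj x w -> rdisj y w -> rdisj (x + y) w.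
Proof.
move=> xw yw; apply: rle_anti; last by apply: rmeet_glb; exact: rabs_ge0.
apply: (rle_trans (y := rmeet (rabs x + rabs y) (rabs w))).
  exact/rmeet_lel2/rle_rabsD.
by rewrite -[0]addr0 -{1}xw -yw; apply: rmeetD_le; exact: rabs_ge0.
Qed.

Lemma rdisjZ (a : R) x w : rdisj x w -> rdisj (a *: x) w.
Proof. by rewrite /rdisj rabsZ; apply: rmeetZl_eq0 => //; exact: rabs_ge0. Qed.

Lemma rdisjN x w : rdisj x w -> rdisj (- x) w.
Proof. by rewrite -scaleN1r; apply: rdisjZ. Qed.

Lemma rdisj0 w : rdisj 0 w.
Proof.
rewrite /rdisj rabs0; apply: rle_anti; first exact: rmeet_lel.
by apply: rmeet_glb; [exact: rle_refl|exact: rabs_ge0].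
Qed.

Lemma rdisjxx x : rdisj x x -> x = 0.
Proof. by rewrite /rdisj rmeetxx; apply: rabs_eq0. Qed.

Lemma rdisj_rabs x w : rdisj (rabs x) w <-> rdisj x w.
Proof. by rewrite /rdisj rabs_id. Qed.

Lemma rdisj_rpos x w : rdisj (rpos x) w -> rdisj (rpos (- x)) w -> rdisj x w.
Proof. by move=> pw nw; rewrite -(rpos_sub x); apply: rdisjD => //; exact: rdisjN. Qed.

Lemma rdisj_rpos_subr x w : 0 <=: x -> rdisj x w -> rpos (x - rabs w) = x.
Proof. by move=> x0; rewrite -subr_rmeet /rdisj ger0_rabs // => ->; rewrite subr0. Qed.

Lemma rdisj_rpos_rposN x : rdisj (rpos x) (rpos (- x)).
Proof. by rewrite /rdisj !rabs_rpos; exact: rmeet_rpos_rposN. Qed.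

End Disjointness.

Section Bands.
Variable E : riesz.
Implicit Types (x y : E) (A B P : set E).

Definition nonzero A := exists2 x, A x & x <> 0.

Definition disjoint_bands (A : nat -> set E) :=
  (forall n, is_band (A n)) /\ (forall n, nonzero (A n)) /\
  (forall n m, n <> m -> A n `&` A m `<=` [set 0]).

Lemma band0 A : is_band A -> A 0.
Proof. by case=> [[]]. Qed.

Lemma bandD A x y : is_band A -> A x -> A y -> A (x + y).
Proof. by move=> [[_ [+ _]] _]; apply. Qed.

Lemma bandZ A (a : R) x : is_band A -> A x -> A (a *: x).
Proof. by move=> [[_ [_ [+ _]]] _]; apply. Qed.

Lemma band_le A x y : is_band A -> A y -> rabs x <=: rabs y -> A x.
Proof. by move=> [[_ [_ [_ +]]] _]; apply. Qed.

Lemma is_sup_set0 s : is_sup (@set0 E) s -> s = 0.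
Proof.
move=> [_ lub]; have least u : s <=: u by apply: lub.
apply: rle_anti => //; have := least (s + s).
by rewrite -{1}[s]addr0 => /(rle_add (- s)); rewrite addrK addr0 subrr.
Qed.

Lemma dcompl_sup A D s : D `<=` dcompl A -> is_sup D s -> dcompl A s.
Proof.
move=> DA [ub lub] y Ay.
have [[d0 Dd0]|/nonemptyPn D0] := pselect (D !=set0); last first.
  by move: D0 ub lub => -> ub lub; rewrite (is_sup_set0 (conj ub lub)); exact: rdisj0.
apply: rdisj_rpos.
  (* Subtracting [rabs y] does not change the positive part of any [d] in [D],
     so [m] bounds [D], and [rpos s <= m] forces [rmeet (rpos s) (rabs y) <= 0]. *)
  pose m := rpos (rpos s - rabs y).
  have Dm d : D d -> d <=: m.
    move=> Dd; apply: rle_trans (rpos_ge d) _.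
    have dy : rdisj (rpos d) y.
      by apply: rdisj_le (DA _ Dd _ Ay); exact: rabs_rpos_le.
    rewrite -(rdisj_rpos_subr (rpos_ge0 d) dy).
    by apply/rpos_le/rle_add/rpos_le/ub.
  have : rpos s <=: m by apply: rjoin_lub; [exact: lub|exact: rpos_ge0].
  rewrite /m -subr_rmeet -rsubr_ge0 addrAC subrr add0r => /rleNr.
  rewrite oppr0 => le0; rewrite /rdisj rabs_rpos; apply: rle_anti => //.
  by apply: rmeet_glb; [exact: rpos_ge0|exact: rabs_ge0].
apply: rdisj_le (DA _ Dd0 _ Ay); rewrite -[rabs d0]rabsN.
apply: rle_trans _ (rabs_rpos_le (- d0)).
by rewrite !rabs_rpos; apply/rpos_le/rleN2/ub.
Qed.

Lemma band_dcompl A : is_band (dcompl A).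
Proof.
split; last exact: dcompl_sup.
split; first by move=> y _; exact: rdisj0.
split; first by move=> x y xA yA z Az; apply: rdisjD; [exact: xA|exact: yA].
split; first by move=> a x xA z Az; apply/rdisjZ/xA.
by move=> x y yA xy z Az; apply: rdisj_le xy _; exact: yA.
Qed.

Lemma band_bigcap (Fam : set (set E)) :
  (forall B, Fam B -> is_band B) -> is_band (\bigcap_(B in Fam) B).
Proof.
move=> bF; split; last first.
  by move=> D s DF Ds B FB; apply: (bF B FB).2 Ds => d /DF; apply.
split; first by move=> B /bF /band0.
split; first by move=> x y xF yF B FB; exact: bandD (bF B FB) (xF B FB) (yF B FB).
split; first by move=> a x xF B FB; exact: bandZ (bF B FB) (xF B FB).
by move=> x y yF xy B FB; exact: band_le (bF B FB) (yF B FB) xy.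
Qed.

Lemma band_setT : is_band (@setT E).
Proof. by split=> //; split. Qed.

Lemma band_setI A B : is_band A -> is_band B -> is_band (A `&` B).
Proof.
move=> bA bB; have -> : A `&` B = \bigcap_(C in [set A; B]) C.
  apply/seteqP; split=> [x [Ax Bx] C [->|->] //|x ABx].
  by split; apply: ABx; [left|right].
by apply: band_bigcap => C [->|->].
Qed.

Lemma band_set0 : is_band [set (0 : E)].
Proof.
suff -> : [set (0 : E)] = dcompl setT by exact: band_dcompl.
apply/seteqP; split => [x -> y _|x x0]; first exact: rdisj0.
by apply: rdisjxx; exact: x0.
Qed.

Lemma setI_dcompl A : A `&` dcompl A `<=` [set 0].
Proof. by move=> x [Ax xA]; apply: rdisjxx; exact: xA. Qed.

Lemma subset_dcompl P A : is_ideal P -> is_ideal A ->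
  P `&` A `<=` [set 0] -> P `<=` dcompl A.
Proof.
move=> [_ [_ [_ sP]]] [_ [_ [_ sA]]] PA0 x Px y Ay.
have m0 : 0 <=: rmeet (rabs x) (rabs y) by apply: rmeet_glb; exact: rabs_ge0.
apply: PA0; split.
  by apply: (sP _ x Px); rewrite (ger0_rabs m0); exact: rmeet_lel.
by apply: (sA _ y Ay); rewrite (ger0_rabs m0); exact: rmeet_ler.
Qed.

Definition pband y : set E := dcompl (dcompl [set y]).

Lemma pband_band y : is_band (pband y).
Proof. exact: band_dcompl. Qed.

Lemma pband_id y : pband y y.
Proof. by move=> z zy; apply/rdisjC/zy. Qed.

Lemma pband_disj y z : rdisj y z -> pband y `&` pband z `<=` [set 0].
Proof.
move=> yz w [wy wz]; apply: rdisjxx.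
have wz' : rdisj w z by apply: wy => _ ->; exact: rdisjC.
by apply: wz => _ ->.
Qed.

End Bands.

(** * The Stone space of the bands and the free product *)

Section StoneSpace.
Variable E : riesz.
Implicit Types (A B C P Q : set E) (U V : set (set E)).

Definition band_filter U :=
  U `<=` @is_band E /\ U setT /\ ~ U [set 0] /\
  (forall A B, U A -> U B -> U (A `&` B)) /\
  (forall A B, U A -> is_band B -> A `<=` B -> U B).

Lemma ultra_band_filter U :
  is_ultra U <-> band_filter U /\ forall A, is_band A -> U A \/ U (dcompl A).
Proof. by split=> [[? [? [? [? [? ?]]]]]|[[? [? [? [? ?]]]] ?]]. Qed.

Lemma band_filter_bigcup (Fam : set (set (set E))) :
  Fam !=set0 -> Fam `<=` band_filter -> total_on Fam subset ->
  band_filter (\bigcup_(U in Fam) U).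
Proof.
move=> [U0 FU0] Ff tot; split; first by move=> A [U /Ff [+ _]]; apply.
split; first by exists U0 => //; case: (Ff _ FU0) => _ [].
split; first by move=> [U /Ff [_ [_ []]]].
split.
  move=> A B [U FU UA] [V FV VB]; have [UV|VU] := tot U V FU FV.
    by exists V => //; apply: (Ff _ FV).2.2.2.1 => //; exact: UV.
  by exists U => //; apply: (Ff _ FU).2.2.2.1 => //; exact: VU.
by move=> A B [U FU UA] bB AB; exists U => //; apply: (Ff _ FU).2.2.2.2 UA bB AB.
Qed.

Lemma maximal_band_filter_dcompl U : band_filter U ->
  (forall V, band_filter V -> U `<=` V -> V = U) ->
  forall C, is_band C -> U C \/ U (dcompl C).
Proof.
move=> fU maxU C bC; have [bandU [UT [U0 [UI US]]]] := fU.
have [[P UP PC0]|noP] := pselect (exists2 P, U P & P `&` C `<=` [set 0]).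
  by right; apply: US UP (band_dcompl _) (subset_dcompl (bandU _ UP).1 bC.1 PC0).
pose V := [set B | is_band B /\ exists2 P, U P & P `&` C `<=` B].
have fV : band_filter V.
  split; first by move=> B [].
  split; first by split; [exact: band_setT|exists setT].
  split; first by move=> [_ [P UP PC0]]; apply: noP; exists P.
  split.
    move=> A B [bA [P UP PA]] [bB [Q UQ QB]]; split; first exact: band_setI.
    by exists (P `&` Q); [exact: UI|move=> x [[Px Qx] Cx]; split; [exact: PA|exact: QB]].
  by move=> A B [bA [P UP PA]] bB AB; split => //; exists P => //; apply: subset_trans AB.
left; rewrite -(maxU V fV); first by split => //; exists setT => // x [].
by move=> B UB; split; [exact: bandU|exists B => // x []].
Qed.

Lemma band_filter_ultra F0 : band_filter F0 -> exists2 U, is_ultra U & F0 `<=` U.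
Proof.
(* Zorn's lemma is applied to chains that may be empty, hence the [set0] case. *)
move=> fF0; pose Ext X := X = set0 \/ band_filter X /\ F0 `<=` X.
have Ext_chain Fam : Fam `<=` Ext -> total_on Fam subset -> Ext (\bigcup_(X in Fam) X).
  move=> FExt tot; pose Fam' := Fam `\` [set set0].
  have -> : \bigcup_(X in Fam) X = \bigcup_(X in Fam') X.
    apply/seteqP; split=> [A [X FX XA]|A [X [FX _] XA]]; last by exists X.
    by exists X => //; split => // X0; rewrite X0 in XA.
  have [[X0 F'X0]|/nonemptyPn ->] := pselect (Fam' !=set0); last by left; rewrite bigcup_set0.
  have fX X : Fam' X -> band_filter X /\ F0 `<=` X by move=> [/FExt [|//]].
  right; split; last by move=> A /(fX _ F'X0).2 ?; exists X0.
  apply: band_filter_bigcup; first by exists X0.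
    by move=> X /fX [].
  by move=> X Y [FX _] [FY _]; exact: tot.
have [U [ExtU maxU]] := Zorn_bigcup Ext_chain.
have [fU F0U] : band_filter U /\ F0 `<=` U.
  case: ExtU => // U0; exfalso; apply: (maxU F0); last by right; split.
  by rewrite U0; split => // /(_ setT fF0.2.1).
exists U => //; apply/ultra_band_filter; split => //.
apply: maximal_band_filter_dcompl fU _ => V fV UV.
apply: contrapT => VU; apply: (maxU V); last by right; split => //; exact: subset_trans UV.
by split => // VU'; apply/VU/seteqP.
Qed.

Lemma stone_of_band A : is_band A -> nonzero A -> exists U : stone E, sval U A.
Proof.
move=> bA [x Ax x0]; pose F0 := [set B | is_band B /\ A `<=` B].
have fF0 : band_filter F0.
  split; first by move=> B [].
  split; first by split; [exact: band_setT|].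
  split; first by move=> [_ /(_ x Ax)].
  split; first by move=> B C [bB AB] [bC AC]; split; [exact: band_setI|rewrite subsetI].
  by move=> B C [_ AB] bC BC; split => //; exact: subset_trans BC.
have [U uU F0U] := band_filter_ultra fF0.
by exists (exist _ U uU); apply: F0U; split => //.
Qed.

Section StonePoint.
Variable U : stone E.

Lemma stone_band P : sval U P -> is_band P.
Proof. exact: (svalP U).1. Qed.

Lemma stoneT : sval U setT.
Proof. exact: (svalP U).2.1. Qed.

Lemma stone_neq0 : ~ sval U [set 0].
Proof. exact: (svalP U).2.2.1. Qed.

Lemma stoneI P Q : sval U P -> sval U Q -> sval U (P `&` Q).
Proof. exact: (svalP U).2.2.2.1. Qed.

Lemma stoneS P Q : sval U P -> is_band Q -> P `<=` Q -> sval U Q.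
Proof. exact: (svalP U).2.2.2.2.1. Qed.

Lemma stone_dcompl P : is_band P -> sval U P \/ sval U (dcompl P).
Proof. exact: (svalP U).2.2.2.2.2. Qed.

Lemma stone_disj P Q : sval U P -> sval U Q -> P `&` Q `<=` [set 0] -> False.
Proof.
by move=> UP UQ PQ0; apply: stone_neq0; exact: (stoneS (stoneI UP UQ) (@band_set0 E) PQ0).
Qed.

Lemma stone_dcomplN P : sval U P -> ~ sval U (dcompl P).
Proof. by move=> UP UPd; apply: stone_disj UP UPd (@setI_dcompl E P). Qed.

End StonePoint.

Lemma is_ultra_limit (UU : set_system nat) (Us : nat -> stone E) : UltraFilter UU ->
  is_ultra (fun P => UU [set n | sval (Us n) P]).
Proof.
move=> UF; apply/ultra_band_filter; rewrite /band_filter /=; split.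
  split; first by move=> P /filter_ex [n /stone_band].
  split; first by apply: filterS filterT => n _; exact: stoneT.
  split; first by move=> /filter_ex [n /stone_neq0].
  split; first by move=> P Q UP UQ; apply: filterS (filterI UP UQ) => n []; exact: stoneI.
  by move=> P Q UP bQ PQ; apply: filterS UP => n /stoneS; apply.
move=> P bP; have [UP|UnP] := in_ultra_setVsetC [set n | sval (Us n) P] UF; first by left.
by right; apply: filterS UnP => n /= nP; case: (stone_dcompl (Us n) bP).
Qed.

Definition stone_limit (UU : set_system nat) (UF : UltraFilter UU) (Us : nat -> stone E) :
  stone E := exist _ _ (is_ultra_limit Us UF).

End StoneSpace.

Section ProductStone.
Variables E F : riesz.
Local Notation point := (stone E * stone F)%type.
Implicit Types (P : set E) (Q : set F) (W : set point).

Definition rect P Q : set point := fun p => sval p.1 P /\ sval p.2 Q.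

Lemma prod_open_rect P Q : is_band P -> is_band Q -> prod_open (rect P Q).
Proof. by move=> bP bQ p [pP pQ]; exists P, Q; do 4!split => //. Qed.

Lemma prod_open_rectC P Q : is_band P -> is_band Q -> prod_open (~` rect P Q).
Proof.
move=> bP bQ p pPQ; have [pP|pQ] : ~ sval p.1 P \/ ~ sval p.2 Q.
  by apply/not_andP => -[? ?]; apply: pPQ.
- have pPd : sval p.1 (dcompl P) by case: (stone_dcompl p.1 bP).
  exists (dcompl P), setT; split; first exact: band_dcompl.
  split; first exact: band_setT.
  split => //; split; first exact: stoneT.
  by move=> q qPd _ [qP _]; exact: stone_dcomplN qP qPd.
- have pQd : sval p.2 (dcompl Q) by case: (stone_dcompl p.2 bQ).
  exists setT, (dcompl Q); split; first exact: band_setT.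
  split; first exact: band_dcompl.
  split; first exact: stoneT.
  split => //.
  by move=> q _ qQd [_ qQ]; exact: stone_dcomplN qQ qQd.
Qed.

Lemma prod_clopen_rect P Q : is_band P -> is_band Q -> prod_clopen (rect P Q).
Proof. by move=> bP bQ; split; [exact: prod_open_rect|exact: prod_open_rectC]. Qed.

Lemma prod_open_setI W1 W2 : prod_open W1 -> prod_open W2 -> prod_open (W1 `&` W2).
Proof.
move=> oW1 oW2 p [pW1 pW2].
have [P1 [Q1 [bP1 [bQ1 [pP1 [pQ1 W1PQ]]]]]] := oW1 p pW1.
have [P2 [Q2 [bP2 [bQ2 [pP2 [pQ2 W2PQ]]]]]] := oW2 p pW2.
exists (P1 `&` P2), (Q1 `&` Q2).
split; first exact: band_setI.
split; first exact: band_setI.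
split; first exact: stoneI.
split; first exact: stoneI.
move=> q qP qQ; split.
  by apply: W1PQ; [apply: stoneS qP bP1 _|apply: stoneS qQ bQ1 _]; exact: subIsetl.
by apply: W2PQ; [apply: stoneS qP bP2 _|apply: stoneS qQ bQ2 _]; exact: subIsetr.
Qed.

Lemma prod_open_setU W1 W2 : prod_open W1 -> prod_open W2 -> prod_open (W1 `|` W2).
Proof.
move=> oW1 oW2 p [/oW1|/oW2] [P [Q [bP [bQ [pP [pQ WPQ]]]]]].
  by exists P, Q; do 4!split => //; move=> q qP qQ; left; exact: WPQ.
by exists P, Q; do 4!split => //; move=> q qP qQ; right; exact: WPQ.
Qed.

Lemma prod_clopen_setI W1 W2 : prod_clopen W1 -> prod_clopen W2 -> prod_clopen (W1 `&` W2).
Proof.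
by move=> [oW1 cW1] [oW2 cW2]; split; [exact: prod_open_setI|rewrite setCI; exact: prod_open_setU].
Qed.

Lemma prod_clopen_setC W : prod_clopen W -> prod_clopen (~` W).
Proof. by move=> [oW cW]; split; rewrite ?setCK. Qed.

Definition is_clopen_sup (Fam : set (set point)) W :=
  prod_clopen W /\ (forall V, Fam V -> V `<=` W) /\
  forall W', prod_clopen W' -> (forall V, Fam V -> V `<=` W') -> W `<=` W'.

Lemma boolean_iso_subset (G : riesz) (f : set point -> set G) W1 W2 :
  boolean_iso f -> prod_clopen W1 -> prod_clopen W2 -> f W1 `<=` f W2 <-> W1 `<=` W2.
Proof.
move=> [_ [_ [f_inj [fI _]]]] cW1 cW2; split=> [fW12|W12]; last first.
  by rewrite -(setIidl W12) fI //; exact: subIsetr.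
have <- : W1 `&` W2 = W1.
  by apply: f_inj; rewrite ?fI ?(setIidl fW12) //; exact: prod_clopen_setI.
exact: subIsetr.
Qed.

Lemma boolean_iso_clopen_sup (G : riesz) (f : set point -> set G) (Fam : set (set point)) :
  boolean_iso f -> Fam `<=` @prod_clopen E F -> exists W, is_clopen_sup Fam W.
Proof.
move=> fiso cFam; have [fband [fsurj _]] := fiso.
pose ub := [set B | is_band B /\ forall V, Fam V -> f V `<=` B].
have [W [cW fW]] := fsurj _ (band_bigcap (fun B (ubB : ub B) => ubB.1)).
exists W; split => //; split.
  move=> V FamV; apply/(boolean_iso_subset fiso (cFam _ FamV) cW).
  by rewrite fW => x fVx B [_ /(_ V FamV)]; apply.
move=> W' cW' ubW'; apply/(boolean_iso_subset fiso cW cW'); rewrite fW => x.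
apply; split; first exact: fband.
by move=> V FamV; apply/(boolean_iso_subset fiso (cFam _ FamV) cW')/ubW'.
Qed.

End ProductStone.

Section RectangleSequence.
Variables E F : riesz.

Lemma rect_seq_no_clopen_sup (A : nat -> set E) (B : nat -> set F) W :
  disjoint_bands A -> disjoint_bands B ->
  ~ is_clopen_sup [set rect (A n) (B n) | n in setT] W.
Proof.
move=> [bA [nzA dA]] [bB [nzB dB]] [cW [ubW lubW]].
have rectW n : rect (A n) (B n) `<=` W by apply: ubW; exists n.
have /choice [Us UsA] n : exists U : stone E, sval U (A n) by exact: stone_of_band.
have /choice [Vs VsB] n : exists V : stone F, sval V (B n) by exact: stone_of_band.
have [UU [UF ooUU]] := ultraFilterLemma eventually_filter.
pose p := (stone_limit UF Us, stone_limit UF Vs).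
(* Every basic neighbourhood of [p] contains some [(Us n, Vs n)], and [W] is closed. *)
have Wp : W p.
  apply: contrapT => nWp; have [P [Q [_ [_ [+ [+ PQnW]]]]]] := cW.2 p nWp.
  rewrite /p /= => pP pQ.
  have [n [Pn Qn]] := filter_ex (filterI pP pQ).
  by apply: (PQnW (Us n, Vs n) Pn Qn); apply: rectW; split; [exact: UsA|exact: VsB].
have [P [Q [bP [bQ [+ [+ PQW]]]]]] := cW.1 p Wp.
rewrite /p /= => pP pQ.
have [n [Pn Qn]] := filter_ex (filterI pP pQ).
have /filter_ex [m [[Pm Qm] mn]] :
    UU ([set k | sval (Us k) P] `&` [set k | sval (Vs k) Q] `&` [set k | k <> n]).
  apply: filterI (filterI pP pQ) _; apply: ooUU.
  by exists n.+1 => // k /= nk kn; rewrite kn ltnn in nk.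
(* [(Us n, Vs m)] is in [W] and in [K], but [K] meets no [rect (A k) (B k)]. *)
pose K := rect (P `&` A n) (Q `&` B m).
have : W `<=` W `&` ~` K.
  apply: lubW.
    apply: prod_clopen_setI cW (prod_clopen_setC (prod_clopen_rect _ _));
    exact: band_setI.
  move=> _ [k _ <-] r rABk; split; first exact: rectW rABk.
  case: rABk => rAk rBk [rPAn rQBm]; have [kn|kn] := pselect (k = n).
    rewrite kn in rBk.
    by apply: stone_disj rBk (stoneS rQBm (bB m) (@subIsetr _ _ _)) (dB _ _ _); exact/nesym.
  exact: stone_disj rAk (stoneS rPAn (bA n) (@subIsetr _ _ _)) (dA _ _ kn).
move=> /(_ (Us n, Vs m) (PQW (Us n, Vs m) Pn Qm)) [_]; apply.
by split; apply: stoneI; [exact: Pn|exact: UsA|exact: Qm|exact: VsB].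
Qed.

End RectangleSequence.

(** * Infinite disjoint sequences of bands *)

Section BandFamilies.
Variable E : riesz.
Implicit Types (a c x y : set E) (s : seq (set E)).

Definition disjoint_family a s :=
  {in s, forall x, [/\ is_band x, nonzero x & x `<=` a]} /\
  pairwise (fun x y => `[< x `&` y `<=` [set 0] >]) s.

Definition unbounded_below a := forall N : nat, exists2 s, (N <= size s)%N & disjoint_family a s.

Lemma disjoint_family_split a c s : is_band c -> disjoint_family a s ->
  exists s1 s2, [/\ disjoint_family (a `&` c) s1, disjoint_family (a `&` dcompl c) s2
    & (size s1 + size s2 = size s)%N].
Proof.
move=> bc [fam pw]; pose meets x := `[< nonzero (x `&` c) >].
exists [seq x `&` c | x <- s & meets x], [seq x <- s | ~~ meets x].
split; last by rewrite size_map !size_filter count_predC.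
- split.
    move=> z /mapP [x]; rewrite mem_filter => /andP [/asboolP nzxc xs] ->.
    have [bx _ xa] := fam x xs; split => //; first exact: band_setI.
    by move=> y [xy cy]; split => //; exact: xa.
  rewrite pairwise_map; apply: sub_pairwise (pairwise_filter _ pw) => x y /asboolP xy.
  by apply/asboolP => w [[xw _] [yw _]]; apply: xy.
- split; last exact: pairwise_filter.
  move=> x; rewrite mem_filter => /andP [/asboolPn nzxc xs]; have [bx nzx xa] := fam x xs.
  split => // w xw; split; first exact: xa.
  apply: subset_dcompl bx.1 bc.1 _ _ xw => v xcv; apply: contrapT => v0; apply: nzxc.
  by exists v.
Qed.

Lemma unbounded_split a c : is_band c -> unbounded_below a ->
  unbounded_below (a `&` c) \/ unbounded_below (a `&` dcompl c).
Proof.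
move=> bc ua; apply: contrapT => /not_orP [/existsNP [N1 b1] /existsNP [N2 b2]].
have [s sN fs] := ua (N1 + N2)%N.
have [s1 [s2 [f1 f2 sz]]] := disjoint_family_split bc fs.
have [le1|lt1] := leqP N1 (size s1); first by apply: b1; exists s1.
by apply: b2; exists s2 => //; lia.
Qed.

Definition unbounded_band a := is_band a /\ unbounded_below a.

Lemma unbounded_step a : unbounded_band a -> exists x y,
  [/\ is_band x, nonzero x & x `<=` a] /\
  [/\ unbounded_band y, y `<=` a & x `&` y `<=` [set 0]].
Proof.
move=> [ba ua]; have [[|x1 [|x2 s]] //= _ [fam pw]] := ua 2%N.
have [bx1 nzx1 x1a] := fam x1 (mem_head _ _).
have /fam [bx2 nzx2 x2a] : x2 \in [:: x1, x2 & s] by rewrite !inE eqxx orbT.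
move: pw => /= /andP [/andP [/asboolP x12 _] _].
have x2d : x2 `<=` dcompl x1 by apply: subset_dcompl bx2.1 bx1.1 _; rewrite setIC.
have nz1 : nonzero (a `&` x1) by case: nzx1 => w xw w0; exists w => //; split => //; exact: x1a.
have nz2 : nonzero (a `&` dcompl x1).
  by case: nzx2 => w xw w0; exists w => //; split; [exact: x2a|exact: x2d].
have b1 := band_setI ba bx1; have b2 := band_setI ba (band_dcompl x1).
have d12 : (a `&` x1) `&` (a `&` dcompl x1) `<=` [set 0].
  by move=> w [[_ x1w] [_ x1dw]]; apply: (@setI_dcompl _ x1).
have [u1|u2] := unbounded_split bx1 ua.
  exists (a `&` dcompl x1), (a `&` x1); split; split => //; try exact: subIsetl.
  by rewrite setIC.
by exists (a `&` x1), (a `&` dcompl x1); split; split => //; exact: subIsetl.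
Qed.

Lemma disjoint_bands_of_unbounded :
  unbounded_below setT -> exists A : nat -> set E, disjoint_bands A.
Proof.
move=> uT.
have /choice [g gP] a : exists xy : set E * set E, unbounded_band a ->
    [/\ is_band xy.1, nonzero xy.1 & xy.1 `<=` a] /\
    [/\ unbounded_band xy.2, xy.2 `<=` a & xy.1 `&` xy.2 `<=` [set 0]].
  have [ua|nua] := pselect (unbounded_band a); last by exists (setT, setT).
  by have [x [y xy]] := unbounded_step ua; exists (x, y).
(* [a n] is the unbounded band left after [n] steps; the [n]-th band of the
   sequence is split off [a n] and is disjoint from [a n.+1]. *)
pose a n := iter n (fun b => (g b).2) setT.
have aP n : unbounded_band (a n).
  elim: n => [|n uan]; first by split; [exact: band_setT|].
  by have [_ []] := gP _ uan.
have a_decr n k : (n <= k)%N -> a k `<=` a n.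
  move=> /subnK <-; elim: (k - n)%N => [//|d IH].
  by apply: subset_trans IH; have [_ []] := gP _ (aP (d + n)%N).
exists (fun n => (g (a n)).1); split; first by move=> n; have [[]] := gP _ (aP n).
split; first by move=> n; have [[]] := gP _ (aP n).
have lt_disj n m : (n < m)%N -> (g (a n)).1 `&` (g (a m)).1 `<=` [set 0].
  move=> nm w [wn wm]; have [_ [_ _ dn]] := gP _ (aP n); apply: dn; split => //.
  by apply: (a_decr n.+1 m nm); have [[_ _ sub] _] := gP _ (aP m); exact: sub.
move=> n m /eqP; rewrite neq_ltn => /orP [nm|mn]; first exact: lt_disj.
by rewrite setIC; exact: lt_disj.
Qed.

End BandFamilies.

Section DisjointSystems.
Variable E : riesz.

Definition disjoint_system (N : nat) (u : nat -> E) :=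
  (forall i, (i < N)%N -> u i <> 0) /\
  (forall i k, (i < N)%N -> (k < N)%N -> i <> k -> rdisj (u i) (u k)).

Definition has_disjoint_system (N : nat) := exists u, disjoint_system N u.

Lemma disjoint_systemP (N : nat) (u : nat -> E) :
  (forall i, (i < N)%N -> u i <> 0) ->
  (forall i k, (i < k < N)%N -> rdisj (u i) (u k)) -> disjoint_system N u.
Proof.
move=> u_neq0 u_disj; split => // i k iN kN /eqP; rewrite neq_ltn.
by case/orP => [ik|ki]; [apply: u_disj; rewrite ik|apply/rdisjC/u_disj; rewrite ki].
Qed.

Lemma disjoint_system_maximal (j : nat) (u : nat -> E) (w : E) :
  disjoint_system j u -> ~ has_disjoint_system j.+1 ->
  (forall k, (k < j)%N -> rdisj w (u k)) -> w = 0.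
Proof.
move=> [u_neq0 u_disj] u_max wu; apply: contrapT => w0; apply: u_max.
exists (fun k => if k == j then w else u k); apply: disjoint_systemP => [i|i k].
  by rewrite ltnS; case: eqP => // /eqP ij ilej; apply: u_neq0; lia.
move=> /andP [ik klej]; have ij : (i < j)%N by lia.
rewrite (ltn_eqF ij); case: eqP => [_|/eqP kj]; first exact/rdisjC/wu.
by apply: u_disj => //; lia.
Qed.

End DisjointSystems.

Section MaximalDisjointSystem.
Variables (E : riesz) (j : nat) (u : nat -> E).
Hypotheses (archE : archimedean E) (u_ge0 : forall i, 0 <=: u i)
  (u_sys : disjoint_system j u) (u_max : ~ has_disjoint_system E j.+1).

Let u_neq0 := u_sys.1.
Let u_disj := u_sys.2.

Definition others i : set E := [set u k | k in [set k | (k < j)%N /\ k <> i]].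

Let others_band i := band_dcompl (others i).

Lemma dcompl_others_u i : (i < j)%N -> dcompl (others i) (u i).
Proof. by move=> ij _ [k [kj ki] <-]; apply: u_disj => // ik; apply: ki. Qed.

Lemma dcompl_others_split i w1 w2 : (i < j)%N ->
  dcompl (others i) w1 -> dcompl (others i) w2 -> rdisj w1 w2 -> w1 = 0 \/ w2 = 0.
Proof.
move=> ij Dw1 Dw2 w12; apply: contrapT => /not_orP [w10 w20]; apply: w20.
pose v k := if k == i then w1 else u k.
have Dv k : (k < j)%N -> k <> i -> others i (u k) by move=> kj ki; exists k.
apply: (@disjoint_system_maximal _ j v) => //; last first.
  move=> k kj; rewrite /v; case: eqP => [_|/eqP ki]; first exact/rdisjC.
  by apply/Dw2/Dv => //; exact/eqP.
split=> [k kj|k l kj lj kl]; rewrite /v; first by case: eqP => // _; exact: u_neq0.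
case: eqP => [ki|/eqP ki]; case: eqP => [li|/eqP li].
- by case: kl; rewrite ki li.
- by apply/Dw1/Dv => //; exact/eqP.
- by apply/rdisjC/Dw1/Dv => //; exact/eqP.
- exact: u_disj.
Qed.

Lemma dcompl_others_real i x : (i < j)%N -> dcompl (others i) x -> 0 <=: x \/ x <=: 0.
Proof.
move=> ij Dx; have Dpart y : rabs y <=: rabs x -> dcompl (others i) y.
  exact: band_le (others_band i) Dx.
have Dneg : dcompl (others i) (rpos (- x)).
  by apply: Dpart; rewrite -(rabsN x); exact: rabs_rpos_le.
have [p0|n0] := dcompl_others_split ij (Dpart _ (rabs_rpos_le x)) Dneg (rdisj_rpos_rposN x).
  by right; rewrite -p0; exact: rpos_ge.
by left; apply/rleN2; rewrite oppr0 -n0; exact: rpos_ge.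
Qed.

Lemma dcompl_others_arch i w : (i < j)%N -> dcompl (others i) w -> 0 <=: w -> w <> 0 ->
  exists2 e : R, 0 < e & e *: u i <=: w.
Proof.
move=> ij Dw w0 wn0.
have [k kwu] : exists k : nat, ~ k%:R *: w <=: u i.
  apply: contrapT => /forallNP kw; apply: wn0; apply: (archE (y := u i) w0) => k.
  exact: contrapT (kw k).
have Dv : dcompl (others i) (k%:R *: w - u i).
  apply: bandD (others_band i) (bandZ _ (others_band i) Dw) _.
  by rewrite -scaleN1r; exact: bandZ (others_band i) (dcompl_others_u ij).
have uw : u i <=: k%:R *: w.
  have [v0|v0] := dcompl_others_real ij Dv; first by move/rsubr_ge0: v0.
  by exfalso; apply: kwu; move/(rleN2 _ _).2: v0; rewrite oppr0 opprB => /rsubr_ge0.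
have k0 : (0 < k)%N.
  rewrite lt0n; apply/eqP => k0; apply: (u_neq0 ij); apply: rle_anti _ (u_ge0 i).
  by move: uw; rewrite k0 scale0r.
have kn0 : k%:R != 0 :> R by rewrite pnatr_eq0 -lt0n.
exists k%:R^-1; first by rewrite invr_gt0 ltr0n.
have ik : 0 <= k%:R^-1 :> R by rewrite invr_ge0 ler0n.
by move: (rle_scale ik uw); rewrite scalerA mulVf // scale1r.
Qed.

Lemma dcompl_others_line i y (n : R) : (i < j)%N -> dcompl (others i) y ->
  0 <=: y -> y <=: n *: u i -> exists c : R, y = c *: u i.
Proof.
move=> ij Dy y0 yn; pose S := [set t : R | t *: u i <=: y].
have S0 : S 0 by rewrite /S /= scale0r.
have supS : has_sup S.
  split; first by exists 0.
  by exists n => t St; apply: rleZl_coef (u_ge0 i) (u_neq0 ij) (rle_trans St yn).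
(* [y - l *: u i] has a sign; unless it is [0], the Archimedean property moves
   [l] by some [e > 0] inside [S] or below an upper bound of [S]. *)
set l := sup S; exists l; apply/eqP; rewrite -subr_eq0; apply/eqP.
have Dw : dcompl (others i) (y - l *: u i).
  apply: bandD (others_band i) Dy _; rewrite -scaleNr.
  exact: bandZ (others_band i) (dcompl_others_u ij).
have [w0|w0] := dcompl_others_real ij Dw; apply: contrapT => wn0.
  have [e e0 ew] := dcompl_others_arch ij Dw w0 wn0.
  have : S (l + e) by move/(rle_add (l *: u i)): ew; rewrite subrK -scalerDl addrC.
  by move/(sup_upper_bound supS); rewrite -/l; lra.
have Dnw : dcompl (others i) (- (y - l *: u i)).
  by rewrite -scaleN1r; exact: bandZ (others_band i) Dw.
have nw0 : 0 <=: - (y - l *: u i) by apply/rleNr; rewrite oppr0.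
have nwn0 : - (y - l *: u i) <> 0 by move/eqP; rewrite oppr_eq0 => /eqP.
have [e e0 ew] := dcompl_others_arch ij Dnw nw0 nwn0.
have : ubound S (l - e).
  move=> t St; apply: rleZl_coef (u_ge0 i) (u_neq0 ij) (rle_trans St _).
  apply/rsubr_ge0; rewrite scalerBl addrAC; apply/rsubr_ge0.
  by rewrite opprB in ew.
by move/(ge_sup (ex_intro _ 0 S0)); rewrite -/l; lra.
Qed.

Lemma dcompl_others_component i z : (i < j)%N -> 0 <=: z ->
  exists c : R, rdisj (z - c *: u i) (u i).
Proof.
move=> ij z0; have nu0 (n : nat) : 0 <=: n%:R *: u i by apply: rscale_ge0.
have /choice [c zc] (n : nat) : exists c : R, rmeet z (n%:R *: u i) = c *: u i.
  have m0 : 0 <=: rmeet z (n%:R *: u i) by apply: rmeet_glb.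
  have Dm : dcompl (others i) (rmeet z (n%:R *: u i)).
    apply: band_le (others_band i) (bandZ _ (others_band i) (dcompl_others_u ij)) _.
    by rewrite !ger0_rabs //; exact: rmeet_ler.
  exact: dcompl_others_line ij Dm m0 (rmeet_ler _ _).
have [n cn] : exists n : nat, c n < n%:R.
  apply: contrapT => /forallNP cn; apply: (u_neq0 ij); apply: (archE (y := z) (u_ge0 i)) => n.
  have ncn : n%:R <= c n by rewrite leNgt; apply/negP; exact: cn.
  by apply: rle_trans (rleZl (u_ge0 i) ncn) _; rewrite -zc; exact: rmeet_lel.
exists (c n); have zc0 : 0 <=: z - c n *: u i by apply/rsubr_ge0; rewrite -zc; exact: rmeet_lel.
have e : rmeet ((n%:R - c n) *: u i) (z - c n *: u i) = 0.
  by rewrite scalerBl -rmeetDl rmeetC zc subrr.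
have ncpos : 0 < n%:R - c n by rewrite subr_gt0.
have tpos : 0 <= (n%:R - c n)^-1 by rewrite invr_ge0 ltW.
apply: rdisjC; rewrite /rdisj !ger0_rabs //.
have := rmeetZl_eq0 tpos (rscale_ge0 (ltW ncpos) (u_ge0 i)) zc0 e.
by rewrite scalerA mulVf ?gt_eqF // scale1r.
Qed.

Lemma maximal_system_span_ge0 z : 0 <=: z -> exists c : nat -> R, z = \sum_(i < j) c i *: u i.
Proof.
move=> z0; have /choice [c cP] i : exists c : R, (i < j)%N -> rdisj (z - c *: u i) (u i).
  have [ij|ji] := ltnP i j; last by exists 0.
  by have [c ?] := dcompl_others_component ij z0; exists c.
exists c; apply/eqP; rewrite -subr_eq0; apply/eqP/(disjoint_system_maximal u_sys u_max) => k kj.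
rewrite (bigD1 (Ordinal kj)) //= opprD addrA; apply: rdisjD; first exact: cP.
apply: rdisjN; elim/big_ind: _ => [|x y|i /eqP ik]; [exact: rdisj0|exact: rdisjD|].
by apply/rdisjZ/u_disj => // ki; apply: ik; exact: val_inj.
Qed.

Lemma maximal_system_span z : exists c : nat -> R, z = \sum_(i < j) c i *: u i.
Proof.
have [c1 e1] := maximal_system_span_ge0 (rpos_ge0 z).
have [c2 e2] := maximal_system_span_ge0 (rpos_ge0 (- z)).
exists (fun i => c1 i - c2 i); rewrite -(rpos_sub z) e1 e2 -sumrB.
by apply: eq_bigr => i _; rewrite scalerBl.
Qed.

Lemma maximal_system_not_infinite_dim : ~ infinite_dim E.
Proof.
move=> /(_ j.+1) [v v_free].
have /choice [co vco] (a : 'I_j.+1) : exists c : nat -> R, v a = \sum_(i < j) c i *: u i.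
  exact: maximal_system_span.
pose M : 'M[R]_(j.+1, j) := \matrix_(a, i) co a i.
have [r rM0 r0] : exists2 r : 'rV[R]_j.+1, r *m M = 0 & r != 0.
  apply: contrapT => nr; have := rank_leq_col M.
  suff /eqP -> : row_free M by rewrite ltnn.
  by apply: inj_row_free => r rM0; apply: contrapT => /eqP r0; apply: nr; exists r.
have [a /eqP] := rV0Pn _ r0; apply; apply: (v_free (fun b => r 0 b) _ a).
under eq_bigr => b _ do rewrite vco scaler_sumr.
rewrite exchange_big /=; apply: big1 => i _.
have := congr1 (fun m : 'rV_j => m 0 i) rM0; rewrite !mxE => rMi.
rewrite -[RHS](scale0r (u i)) -rMi scaler_suml.
by apply: eq_bigr => b _; rewrite scalerA mxE.
Qed.

End MaximalDisjointSystem.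

Lemma has_disjoint_system_all (E : riesz) : archimedean E -> infinite_dim E ->
  forall N, has_disjoint_system E N.
Proof.
move=> archE iE; elim=> [|j [u [u_neq0 u_disj]]]; first by exists (fun=> 0).
apply: contrapT => u_max.
apply: (@maximal_system_not_infinite_dim E j (fun i => rabs (u i))) => //.
- by move=> i; exact: rabs_ge0.
split=> [i ij /rabs_eq0|i k ij kj ik]; first exact: u_neq0.
by apply/rdisj_rabs/rdisjC/rdisj_rabs/rdisjC/u_disj.
Qed.

Lemma unbounded_of_disjoint_systems (E : riesz) :
  (forall N, has_disjoint_system E N) -> unbounded_below (@setT E).
Proof.
move=> sysE N; have [u [u_neq0 u_disj]] := sysE N.
exists [seq pband (u i) | i <- iota 0 N]; first by rewrite size_map size_iota.
split.
  move=> x /mapP [i]; rewrite mem_iota add0n => /andP [_ iN] ->.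
  split => //; first exact: pband_band.
  by exists (u i); [exact: pband_id|exact: u_neq0].
apply/(pairwiseP set0) => i k; rewrite !inE size_map size_iota => iN kN ik.
rewrite !(nth_map 0%N) ?size_iota // !nth_iota // !add0n.
have uik : rdisj (u i) (u k) by apply: u_disj => // ki; move: ik; rewrite ki ltnn.
exact: pband_disj uik.
Qed.

Lemma disjoint_bands_of_infinite_dim (E : riesz) : archimedean E -> infinite_dim E ->
  exists A : nat -> set E, disjoint_bands A.
Proof.
move=> archE iE; apply/disjoint_bands_of_unbounded/unbounded_of_disjoint_systems.
exact: has_disjoint_system_all.
Qed.

Theorem corollary3p3 (E F : riesz) (hE : archimedean E) (hF : archimedean F)
  (iE : infinite_dim E) (iF : infinite_dim F)
  (G : riesz) (tens : E -> F -> G) (hT : fremlin_tensor tens) :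
  ~ exists f : set (stone E * stone F) -> set G, boolean_iso f.
Proof.
move=> [f fiso].
have [A dA] := disjoint_bands_of_infinite_dim hE iE.
have [B dB] := disjoint_bands_of_infinite_dim hF iF.
have rects_clopen : [set rect (A n) (B n) | n in setT] `<=` @prod_clopen E F.
  by move=> _ [n _ <-]; apply: prod_clopen_rect; [exact: dA.1|exact: dB.1].
have [W supW] := boolean_iso_clopen_sup fiso rects_clopen.
exact: rect_seq_no_clopen_sup dA dB supW.
Qed.
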